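(* Fix a calendar time $t$ and a cutoff $T^*>0$. Assume (Adjusted Assumption 1) $\phi(u)=\beta_{T^*}$ for all $u\ge T^*$, for some constant $\beta_{T^*}$; and (Adjusted Assumption 2) $f_t(t-u)=f_t(t)$ for all $u\in[0,T^*]$, where $f_t(s)$ is the conditional density at $s$ of $T$ given $\{T\le t,A(t)=1\}$. Let $\Omega_{T^*}=\int_0^{T^*}\phi(u)\,du$ and assume $\Omega_{T^*}-\beta_{T^*}T^*\neq0$, $p(t)<1$, and $p$ continuous. Then $$P_{rec}(t)=(\Omega_{T^*}-\beta_{T^*}T^* )\,\lambda(t)\{1-p(t)\}+p(t)\beta_{T^*},\qquad\text{i.e.}\qquad \lambda(t)=\frac{P_{rec}(t)-\beta_{T^*}p(t)}{\{1-p(t)\}(\Omega_{T^*}-\beta_{T^*}T^* )}.$$ (Consequently the adjusted estimator $\tilde\lambda=(N_{rec}-N_{pos}\hat\beta_{T^*})/\{N_{neg}(\hat\Omega_{T^*}-\hat\beta_{T^*}T^* )\}$ is the plug-in estimator of $\lambda(t)$.)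
   Context: $T$ is the (calendar) HIV infection time of a subject, a random variable with densities as needed; $A(t)\in\{0,1\}$ indicates eligibility for the target population at calendar time $t$. Prevalence: $p(t)=\Pr(T\le t\mid A(t)=1)$. Incidence: $\lambda(t)=\lim_{dt\to0}\frac1{dt}\Pr(t\le T<t+dt\mid T\ge t, A(t)=1)$. $M$ is the biomarker value of a recency test and $\mathcal R$ a fixed ''test-recent'' region. $\phi(u)=\Pr(M\in\mathcal R\mid T=t-u, A(t)=1)$ for $u\ge0$, assumed not to depend on $t$. $P_{rec}(t)=\Pr(M\in\mathcal R, T\le t\mid A(t)=1)$. $\Omega_{T^*}$ is the mean duration of recent infection (MDRI), $\beta_{T^*}$ the false-recent rate (FRR). $N_{rec},N_{pos},N_{neg}$ are the numbers of test-recent, HIV-positive and HIV-negative subjects in a random sample from the population eligible at $t$; hats denote estimates. *)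

From HB Require Import structures.
From mathcomp Require Import all_boot all_order all_algebra.
From mathcomp Require Import all_classical all_reals all_analysis.
Set Implicit Arguments. Unset Strict Implicit. Unset Printing Implicit Defensive.
Import Order.TTheory GRing.Theory Num.Theory.
Import numFieldNormedType.Exports.
Local Open Scope classical_set_scope.
Local Open Scope ring_scope.

Definition cprob {R : realType} {d} {Om : measurableType d}
  (P : probability Om R) (E F : set Om) : R :=
  fine (P (E `&` F)) / fine (P F).

Section defs.
Context {R : realType} {d : measure_display} {Om : measurableType d}.
Variables (P : probability Om R) (T : Om -> R) (A : R -> set Om).

Definition prevalence (s : R) : R := cprob P (T @^-1` `]-oo, s]) (A s).

(* P_rec(t) = Pr(M in R_rec, T <= t | A(t) = 1); Rec is the event M in R_rec *)
Definition Prec (Rec : set Om) (t : R) : R :=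
  cprob P (Rec `&` T @^-1` `]-oo, t]) (A t).

Definition hazard_quot (t dt : R) : R :=
  dt^-1 * cprob P (T @^-1` `[t, t + dt[) (T @^-1` `[t, +oo[ `&` A t).

Definition is_incidence (t lam : R) : Prop :=
  hazard_quot t @ 0^'+ --> lam.

Definition is_cond_density (t : R) (g : R -> R) : Prop :=
  (forall s, 0 <= g s) /\ measurable_fun setT g /\
  lebesgue_measure.-integrable setT (EFin \o g) /\
  forall B : set R, measurable B ->
    cprob P (T @^-1` B) (A t) = Rintegral lebesgue_measure B g.

(* phi(u) = Pr(M in R_rec | T = t - u, A(t) = 1), u >= 0, as a (version of the)
   regular conditional probability: a measurable [0,1]-valued function such
   that Pr(Rec, T in B | A(t)=1) = int_B phi(t - s) g(s) ds for B <= ]-oo,t]. *)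
Definition is_recency_fn (t : R) (g : R -> R) (Rec : set Om) (phi : R -> R)
  : Prop :=
  measurable_fun setT phi /\ (forall u, 0 <= u -> 0 <= phi u <= 1) /\
  forall B : set R, measurable B -> B `<=` `]-oo, t] ->
    cprob P (Rec `&` T @^-1` B) (A t)
    = Rintegral lebesgue_measure B (fun s => phi (t - s) * g s).

(* f_t(s): conditional density of T given T <= t, A(t) = 1, i.e. g(s)/p(t)
   for s <= t (and 0 for s > t). *)
Definition cond_density_le (t : R) (g : R -> R) (s : R) : R :=
  if s <= t then g s / prevalence t else 0.

End defs.

Definition MDRI {R : realType} (phi : R -> R) (Ts : R) : R :=
  Rintegral lebesgue_measure `[0, Ts] phi.

From HB Require Import structures.
From mathcomp Require Import all_boot all_order all_algebra.
From mathcomp Require Import all_classical all_reals all_analysis.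
From mathcomp Require Import ring measurable_realfun.
Import Order.TTheory GRing.Theory Num.Theory.
Import numFieldNormedType.Exports.
Local Open Scope classical_set_scope.
Local Open Scope ring_scope.

(* Conditionally on A(t), T has density g, and P_rec(t) is the integral of
   phi(t - s) g(s) over s <= t.  Split it at t - T*: before the window phi is
   the constant beta, contributing beta (p(t) - T* g(t)); on the window g is
   constant by Assumption 2, contributing Omega g(t) after the substitution
   u = t - s.  By the fundamental theorem of calculus the hazard quotient tends
   to g(t) / (1 - p(t)), which is therefore lambda(t), and both identities
   follow by algebra. *)

Section reflection.
Context {R : realType}.
Local Notation mu := (@lebesgue_measure R).

(* Typed on measurableTypeR R so that its pushforward of mu is a measure. *)
Definition reflection (t : R) : measurableTypeR R -> measurableTypeR R :=
  fun s => t - s.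

Lemma measurable_reflection (t : R) :
  measurable_fun [set: measurableTypeR R] (reflection t).
Proof.
apply: continuous_measurable_fun => x.
by apply: cvgB; [exact: cvg_cst | exact: cvg_id].
Qed.
Local Hint Extern 0 (measurable_fun _ (reflection _)) =>
  solve [exact: measurable_reflection] : core.

Lemma pushforward_reflection (t : R) (B : set R) : measurable B ->
  pushforward mu (reflection t) B = mu B.
Proof.
move=> mB; apply/esym/lebesgue_measure_unique => //= _ [[a b]] _ <-.
rewrite /pushforward (_ : reflection t @^-1` `]a, b] = `[t - b, t - a[%classic).
  rewrite !lebesgue_measure_itv /= !lte_fin ltrD2l ltrN2.
  by case: ifP => // _; rewrite -!EFinB; congr EFin; ring.
apply/seteqP; split => s /=; rewrite !in_itv /= => /andP[h1 h2]; apply/andP; split.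
- by rewrite lerBlDr -lerBlDl.
- by rewrite ltrBrDr -ltrBrDl.
- by rewrite ltrBrDl -ltrBrDr.
- by rewrite lerBlDl -lerBlDr.
Qed.

Lemma Rintegral_itv_reflect (t a b : R) (f : R -> R) :
  measurable_fun setT f -> (forall u, a <= u <= b -> 0 <= f u) ->
  \int[mu]_(u in `[a, b]) f u = \int[mu]_(s in `[t - b, t - a]) f (t - s).
Proof.
move=> mf f0; congr fine.
rewrite (_ : `[t - b, t - a]%classic = reflection t @^-1` `[a, b]); last first.
  apply/seteqP; split => s /=; rewrite !in_itv /= => /andP[h1 h2]; apply/andP; split.
  - by rewrite lerBrDl -lerBrDr.
  - by rewrite lerBlDr -lerBlDl.
  - by rewrite lerBlDl -lerBlDr.
  - by rewrite lerBrDr -lerBrDl.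
transitivity
  (\int[mu]_(x in reflection t @^-1` `[a, b]) ((EFin \o f) \o reflection t) x)%E;
  last by [].
rewrite -(ge0_integral_pushforward (measurable_reflection t)) //=.
- apply: eq_measure_integral => //= B mB _.
  exact/esym/pushforward_reflection.
- by apply/measurable_EFinP; exact: measurable_funS mf.
- by move=> u; rewrite inE /= in_itv /= => /f0; rewrite lee_fin.
Qed.

End reflection.

Section conditional_probability.
Context {R : realType} {d : measure_display} {Om : measurableType d}.
Variable P : probability Om R.

Lemma cprob_ge0 (E F : set Om) : 0 <= cprob P E F.
Proof. by rewrite /cprob divr_ge0 // fine_ge0 // measure_ge0. Qed.

Lemma le_cprob (E1 E2 F : set Om) : measurable E1 -> measurable E2 ->
  measurable F -> E1 `<=` E2 -> cprob P E1 F <= cprob P E2 F.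
Proof.
move=> mE1 mE2 mF E12; rewrite /cprob ler_wpM2r ?invr_ge0 ?fine_ge0 ?measure_ge0 //.
apply: fine_le; rewrite ?fin_num_measure ?le_measure ?inE //; try exact: measurableI.
exact: setSI.
Qed.

Lemma cprobU (E1 E2 F : set Om) : measurable E1 -> measurable E2 ->
  measurable F -> E1 `&` E2 = set0 ->
  cprob P (E1 `|` E2) F = cprob P E1 F + cprob P E2 F.
Proof.
move=> mE1 mE2 mF E12; rewrite /cprob setIUl measureU; last 3 first.
- exact: measurableI.
- exact: measurableI.
- by rewrite setIACA E12 set0I.
by rewrite fineD ?fin_num_measure ?mulrDl //; exact: measurableI.
Qed.

Lemma cprobIr (E F G : set Om) : 0 < fine (P G) ->
  cprob P E (F `&` G) = cprob P (E `&` F) G / cprob P F G.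
Proof. by move=> PG; rewrite /cprob setIA invf_div mulrA divfK // gt_eqF. Qed.

End conditional_probability.

Section cdf.
Context {R : realType}.
Local Notation mu := (@lebesgue_measure R).

Definition cdf (g : R -> R) (x : R) : R := \int[mu]_(s in `]-oo, x]) g s.

Context {g : R -> R}.
Hypothesis g_int : mu.-integrable setT (EFin \o g).

Let g_intS (B : set R) : measurable B -> mu.-integrable B (EFin \o g).
Proof. by move=> mB; exact: integrableS g_int. Qed.

Lemma Rintegral_itv_oc_cdf {a b : R} : a <= b ->
  \int[mu]_(s in `]a, b]) g s = cdf g b - cdf g a.
Proof.
by move=> ab; rewrite -(@Rintegral_itvB R g -oo%O (BRight b) a) ?g_intS.
Qed.

Lemma Rintegral_itv_cc_cdf {a b : R} : a <= b ->
  \int[mu]_(s in `[a, b]) g s = cdf g b - cdf g a.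
Proof.
by move=> ab; rewrite -Rintegral_itv_obnd_cbnd ?g_intS ?Rintegral_itv_oc_cdf.
Qed.

Lemma Rintegral_itv_co_cdf {a b : R} : a <= b ->
  \int[mu]_(s in `[a, b[) g s = cdf g b - cdf g a.
Proof.
by move=> ab; rewrite Rintegral_itv_bndo_bndc ?g_intS ?Rintegral_itv_cc_cdf.
Qed.

Lemma Rintegral_itv_oo_cdf (a : R) : \int[mu]_(s in `]-oo, a[) g s = cdf g a.
Proof. by rewrite Rintegral_itv_bndo_bndc ?g_intS. Qed.

Lemma Rintegral_itv_cy_cdf (a : R) :
  \int[mu]_(s in `[a, +oo[) g s = \int[mu]_(s in setT) g s - cdf g a.
Proof.
rewrite -Rintegral_itv_obnd_cbnd ?g_intS //.
by rewrite -(@Rintegral_itvB R g -oo%O +oo%O a) ?g_intS // set_itvNyy.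
Qed.

Lemma cdf_derivative {t : R} : {for t, continuous g} ->
  h^-1 * (cdf g (h + t) - cdf g t) @[h --> 0^'] --> g t.
Proof.
move=> gt; have tt1 : t < t + 1 by rewrite ltrDl.
have [dF Fd] := @continuous_FTC1 R g -oo%O t (t + 1) tt1
  (g_intS _ (measurable_itv _)) (ltNyr _) gt.
rewrite -Fd /derive1.
have -> : (fun h => h^-1 * (cdf g (h + t) - cdf g t)) =
    (fun h => h^-1 *: ((cdf g \o shift t) (h *: 1) - cdf g t)).
  by apply/funext => h; rewrite /= -[h *: 1]/(h * 1) mulr1.
exact: dF.
Qed.

Hypothesis g_ge0 : forall s, 0 <= g s.

Lemma cdf_ge0 (x : R) : 0 <= cdf g x.
Proof. by apply: Rintegral_ge0 => s _; exact: g_ge0. Qed.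

(* The left difference quotients of the cdf at t are nonpositive. *)
Lemma cdf_eq0_density_eq0 {t : R} : {for t, continuous g} -> cdf g t = 0 ->
  g t = 0.
Proof.
move=> gt Ft0; have cvL := cvg_dnbhs_at_left (cdf_derivative gt).
apply/eqP; rewrite eq_le g_ge0 andbT -(cvg_lim _ cvL) //.
apply: limr_le; first by apply/cvg_ex; eexists; exact: cvL.
near=> h; have h0 : h < 0 by near: h; exact: nbhs_left_lt.
rewrite Ft0 subr0 mulr_le0_ge0 ?cdf_ge0 // invr_le0 ltW //.
Unshelve. all: end_near. Qed.

End cdf.

Section incidence.
Context {R : realType} {d : measure_display} {Om : measurableType d}.
Local Notation mu := (@lebesgue_measure R).
Context {P : probability Om R} {T : Om -> R} {A : R -> set Om} {t : R}
  {g : R -> R}.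
Hypotheses (mT : measurable_fun setT T) (mAt : measurable (A t))
  (PAt : 0 < fine (P (A t))) (g_dens : is_cond_density P T A t g).

Let mTpre {B : set R} : measurable B -> measurable (T @^-1` B).
Proof. by move=> mB; rewrite -[X in measurable X]setTI; exact: mT. Qed.

Let g_ge0 : forall s, 0 <= g s.
Proof. by case: g_dens. Qed.

Let g_int : mu.-integrable setT (EFin \o g).
Proof. by case: g_dens => _ [_ []]. Qed.

Let cprob_density (B : set R) : measurable B ->
  cprob P (T @^-1` B) (A t) = \int[mu]_(s in B) g s.
Proof. by case: g_dens => _ [_ [_]]; apply. Qed.

Lemma prevalence_cdf : prevalence P T A t = cdf g t.
Proof. exact: cprob_density. Qed.

Lemma cprob_survival : cprob P (T @^-1` `[t, +oo[) (A t) = 1 - cdf g t.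
Proof.
rewrite cprob_density // Rintegral_itv_cy_cdf // -(cprob_density _ measurableT).
by rewrite preimage_setT /cprob setTI divff // gt_eqF.
Qed.

Lemma hazard_quot_cdf (h : R) : 0 < h ->
  hazard_quot P T A t h = h^-1 * (cdf g (h + t) - cdf g t) / (1 - cdf g t).
Proof.
move=> h0; rewrite /hazard_quot cprobIr // -preimage_setI.
rewrite (@setIidl _ `[t, t + h[%classic); last first.
  by move=> s /=; rewrite !in_itv /= andbT => /andP[].
rewrite cprob_survival cprob_density // Rintegral_itv_co_cdf ?lerDl ?ltW //.
by rewrite (addrC t h) mulrA.
Qed.

Lemma incidence_density : {for t, continuous g} ->
  is_incidence P T A t (g t / (1 - prevalence P T A t)).
Proof.
move=> gt; rewrite /is_incidence prevalence_cdf.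
have lim_quot : (fun h => h^-1 * (cdf g (h + t) - cdf g t) / (1 - cdf g t))
    @ 0^'+ --> g t / (1 - cdf g t).
  exact: cvgM (cvg_dnbhs_at_right (cdf_derivative g_int gt)) (cvg_cst _).
apply: (cvg_trans _ lim_quot); apply: near_eq_cvg; near=> h.
have h0 : 0 < h by near: h; exact: nbhs_right_gt.
by rewrite hazard_quot_cdf.
Unshelve. all: end_near. Qed.

Lemma prevalence_eq0_density_eq0 : {for t, continuous g} ->
  prevalence P T A t = 0 -> g t = 0.
Proof. by rewrite prevalence_cdf; exact: cdf_eq0_density_eq0. Qed.

Lemma density_const_on_window {Ts : R} : 0 < prevalence P T A t ->
  (forall u, 0 <= u <= Ts ->
     cond_density_le P T A t g (t - u) = cond_density_le P T A t g t) ->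
  forall s, t - Ts <= s <= t -> g s = g t.
Proof.
move=> p_gt0 f_const s /andP[Tss st]; have := f_const (t - s).
rewrite /cond_density_le subKr lexx st subr_ge0 st lerBlDr -lerBlDl Tss.
move=> /(_ isT) /(congr1 ( *%R^~ (prevalence P T A t))).
by rewrite !divfK // gt_eqF.
Qed.

Context {Rec : set Om} {phi : R -> R}.
Hypotheses (mRec : measurable Rec) (phi_rec : is_recency_fn P T A t g Rec phi).

Let phi_int (a : R) : mu.-integrable `[0, a] (EFin \o phi).
Proof.
case: phi_rec => mphi [phi01 _]; apply: measurable_bounded_integrable => //.
- by rewrite /= lebesgue_measure_itv; case: ifP => _; rewrite ?ltry.
- exact: measurable_funS mphi.
exists 1; split => // M M1 u /=; rewrite in_itv /= => /andP[u0 _].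
have /andP[phi_ge0 phi_le1] := phi01 u u0.
by rewrite ger0_norm // (le_trans phi_le1) ?ltW.
Qed.

Lemma Prec_eq0 : prevalence P T A t = 0 -> Prec P T A Rec t = 0.
Proof.
move=> p0; apply/eqP; rewrite eq_le cprob_ge0 andbT -p0.
have mTt := mTpre (measurable_itv `]-oo, t]).
by apply: le_cprob => //; exact: measurableI.
Qed.

Lemma Prec_split {c : R} : c <= t ->
  Prec P T A Rec t = \int[mu]_(s in `]-oo, c[) (phi (t - s) * g s)
                     + \int[mu]_(s in `[c, t]) (phi (t - s) * g s).
Proof.
case: phi_rec => _ [_ cprob_recency] ct.
have split_t : `]-oo, t]%classic = `]-oo, c[%classic `|` `[c, t]%classic.
  apply/seteqP; split => s /=; rewrite !in_itv /=.
  - by move=> st; case: (ltP s c); [left|right; rewrite st].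
  - by case=> [/ltW/le_trans->|/andP[_ ->]].
rewrite /Prec split_t preimage_setU setIUr cprobU; last 4 first.
- by apply: measurableI => //; exact: mTpre.
- by apply: measurableI => //; exact: mTpre.
- exact: mAt.
- rewrite setIACA -preimage_setI.
  suff -> : `]-oo, c[%classic `&` `[c, t]%classic = set0 :> set R.
    by rewrite preimage_set0 setI0.
  apply/seteqP; split => // s [/=]; rewrite !in_itv /= => sc /andP[cs _].
  by rewrite ltNge cs in sc.
by rewrite !cprob_recency // split_t; [exact: subsetUr|exact: subsetUl].
Qed.

Lemma Prec_const_density_window {Ts beta : R} : 0 < Ts ->
  (forall u, Ts <= u -> phi u = beta) ->
  (forall s, t - Ts <= s <= t -> g s = g t) ->
  Prec P T A Rec t = (MDRI phi Ts - beta * Ts) * g t + cdf g t * beta.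
Proof.
move=> Ts0 phi_frr g_const; have Tst : t - Ts <= t by rewrite lerBlDl lerDr ltW.
have g_window : \int[mu]_(s in `[t - Ts, t]) g s = g t * Ts.
  rewrite (eq_Rintegral _ (g := fun=> g t)); last first.
    by move=> s; rewrite inE => /g_const.
  rewrite Rintegral_cst //= lebesgue_measure_itv /= lte_fin.
  by rewrite ltrBlDl ltrDr Ts0 -EFinB /= opprB addrCA subrr addr0.
have left_tail : \int[mu]_(s in `]-oo, t - Ts[) (phi (t - s) * g s)
    = \int[mu]_(s in `]-oo, t - Ts[) (beta * g s).
  apply: eq_Rintegral => s; rewrite inE /= in_itv /= => sTs.
  by rewrite phi_frr // lerBrDl -lerBrDr ltW.
have window : \int[mu]_(s in `[t - Ts, t]) (phi (t - s) * g s)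
    = \int[mu]_(s in `[t - Ts, t - 0]) (phi (t - s) * g t).
  by rewrite subr0; apply: eq_Rintegral => s; rewrite inE => /g_const ->.
rewrite (Prec_split Tst) left_tail window
  -(Rintegral_itv_reflect t 0 Ts (fun u => phi u * g t)); last 2 first.
- by case: phi_rec => mphi _; apply: measurable_funM => //; exact: measurable_cst.
- case: phi_rec => _ [phi01 _] u /andP[u0 _].
  by have /andP[phi_ge0 _] := phi01 u u0; rewrite mulr_ge0.
rewrite RintegralZl ?Rintegral_itv_oo_cdf //; last exact: integrableS g_int.
rewrite RintegralZr // -/(MDRI phi Ts).
have cdf_split : cdf g (t - Ts) = cdf g t - g t * Ts.
  by rewrite -g_window Rintegral_itv_cc_cdf //; ring.
by rewrite cdf_split; ring.
Qed.

(* Assumption 2 says nothing when p(t) = 0, as cond_density_le then vanishes;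
   in that case Prec and g t are both 0. *)
Lemma Prec_formula {Ts beta : R} : 0 < Ts -> {for t, continuous g} ->
  (forall u, Ts <= u -> phi u = beta) ->
  (forall u, 0 <= u <= Ts ->
     cond_density_le P T A t g (t - u) = cond_density_le P T A t g t) ->
  Prec P T A Rec t
    = (MDRI phi Ts - beta * Ts) * g t + prevalence P T A t * beta.
Proof.
move=> Ts0 gt phi_frr f_const; have [p0|p_neq0] := eqVneq (prevalence P T A t) 0.
  rewrite Prec_eq0 // prevalence_eq0_density_eq0 // p0.
  by rewrite mulr0 mul0r addr0.
have p_gt0 : 0 < prevalence P T A t by rewrite lt0r p_neq0 cprob_ge0.
rewrite (Prec_const_density_window Ts0 phi_frr) ?prevalence_cdf //.
exact: density_const_on_window p_gt0 f_const.
Qed.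

End incidence.

Theorem mainTheorem2 (R : realType) (d : measure_display) (Om : measurableType d)
  (P : probability Om R) (T : Om -> R) (A : R -> set Om) (Rec : set Om)
  (t Ts beta : R) (g phi : R -> R) :
  measurable_fun setT T -> (forall s, measurable (A s)) -> measurable Rec ->
  (0 < fine (P (A t)))%R ->
  0 < Ts ->
  is_cond_density P T A t g ->
  {for t, continuous g} ->
  is_recency_fn P T A t g Rec phi ->
  (* Adjusted Assumption 1 *)
  (forall u, Ts <= u -> phi u = beta) ->
  (* Adjusted Assumption 2 *)
  (forall u, 0 <= u <= Ts ->
     cond_density_le P T A t g (t - u) = cond_density_le P T A t g t) ->
  MDRI phi Ts - beta * Ts != 0 ->
  prevalence P T A t < 1 ->
  continuous (prevalence P T A) ->
  exists lam : R,
    is_incidence P T A t lam /\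
    Prec P T A Rec t
      = (MDRI phi Ts - beta * Ts) * lam * (1 - prevalence P T A t)
        + prevalence P T A t * beta /\
    lam = (Prec P T A Rec t - beta * prevalence P T A t)
          / ((1 - prevalence P T A t) * (MDRI phi Ts - beta * Ts)).
Proof.
move=> mT mA mRec PAt Ts0 g_dens gt phi_rec phi_frr f_const Omega_neq0 p_lt1 _.
have Prec_eq := Prec_formula mT (mA t) g_dens mRec phi_rec Ts0 gt phi_frr f_const.
have p1_neq0 : 1 - prevalence P T A t != 0 by rewrite subr_eq0 gt_eqF.
exists (g t / (1 - prevalence P T A t)); split; first exact: incidence_density.
by rewrite Prec_eq; split; field; rewrite ?Omega_neq0.
Qed.
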